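(* There is a constant $0<c<1$ such that $$\frac{\|F_{1,t}(z,w)\|}{\|(z,w)\|^4}\ge c|t|^2$$ for all $t\in\mathbb{C}$ with $|t|<1/16$ and all $(z,w)\ne(0,0)$. Consequently, for any marked point with associated maps $F_n$ and degree $d$ as in the context, for all $n\ge1$, $i\ge0$ and all $t$ with $|t|<1/16$, $$\frac{1}{\deg F_{n+i}}\log\|F_{n+i}(1,t)\|-\frac{1}{\deg F_n}\log\|F_n(1,t)\|\ge\frac{\log c}{4^{n-1}d}.$$
   Context: $F_{t_1,t_2}(z,w)=\big((t_1w^2-t_2z^2)^2,\;4t_2zw(w-z)(t_1w-t_2z)\big)$, so $F_{1,t}(z,w)=\big((w^2-tz^2)^2,\;4tzw(w-z)(w-tz)\big)$. $\|(z,w)\|=\max\{|z|,|w|\}$. For $c\in\mathbb{C}(t)\setminus\{0,1,t\}$ with homogeneous lift $C$ (coprime homogeneous polynomials $(c_1,c_2)$ of equal degree with $c(t)=c_1(t,1)/c_2(t,1)$): $F_1=F_{t_1,t_2}(C)/\gcd(F_{t_1,t_2}(C))$, $d=\deg F_1$, $F_{n+1}=F_{t_1,t_2}(F_n)/t_2^2$, $\deg F_n=4^{n-1}d$; in particular $F_{n+1}(1,t)=F_{1,t}(F_n(1,t))/t^2$. *)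

From mathcomp Require Import all_boot all_order all_algebra.
From mathcomp Require Import complex.
From mathcomp Require Import all_classical all_reals exp.
Set Implicit Arguments. Unset Strict Implicit. Unset Printing Implicit Defensive.
Import Order.TTheory GRing.Theory Num.Theory.
Local Open Scope ring_scope.

Definition cabs (R : realType) (z : R[i]) : R :=
  Num.sqrt (complex.Re z ^+ 2 + complex.Im z ^+ 2).

Definition nrm (R : realType) (v : R[i] * R[i]) : R :=
  Num.max (cabs v.1) (cabs v.2).

Definition F1t (R : realType) (t z w : R[i]) : R[i] * R[i] :=
  ((w ^+ 2 - t * z ^+ 2) ^+ 2, 4 * t * z * w * (w - z) * (w - t * z)).

Definition pev (R : realType) (P : {poly R[i]} * {poly R[i]}) (t : R[i])
  : R[i] * R[i] := (P.1.[t], P.2.[t]).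

Definition degF (d n : nat) : nat := 4 ^ n.-1 * d.

From mathcomp Require Import all_boot all_order all_algebra.
From mathcomp Require Import complex.
From mathcomp Require Import all_classical all_reals exp.
From mathcomp Require Import ring lra.
Import Order.TTheory GRing.Theory Num.Theory.
Local Open Scope ring_scope.

(* Either |w^2 - t z^2| >= |t| ||(z,w)||^2 / 2, or |t| |z|^2 / 2 < |w|^2 <
   2 |t| |z|^2 (so |w| < |z| / 2); in the latter case w is far from both z
   and t z, and the second coordinate 4 t z w (w - z) (w - t z) is large.
   Hence ||F_{1,t}(z,w)|| >= |t|^2/4 ||(z,w)||^4, i.e.
   log ||F_{k+1}(1,t)|| >= 4 log ||F_k(1,t)|| + log (1/4), and after
   dividing by the degrees 4^(k-1) d the errors form a geometric series. *)

Lemma horner_eq0_poly (F : numDomainType) (p : {poly F}) :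
  (forall x, p.[x] = 0) -> p = 0.
Proof.
move=> p0; apply: (@roots_geq_poly_eq0 _ _ [seq i%:R | i <- iota 0 (size p)]).
- by apply/allP => _ /mapP[i _ ->]; apply/eqP/p0.
- by rewrite map_inj_uniq ?iota_uniq // => i j /eqP; rewrite eqr_nat => /eqP.
- by rewrite size_map size_iota.
Qed.

(* The recurrence t^2 F_{k+1}(1,t) = F_{1,t}(F_k(1,t)) says nothing about
   F_{k+1}(1,0) pointwise; it is recovered from the polynomial identity. *)
Lemma quartic_step_at0 (F : numDomainType) (p q r : {poly F}) :
  (forall t, t ^+ 2 * r.[t] = (q.[t] ^+ 2 - t * p.[t] ^+ 2) ^+ 2) ->
  q.[0] = 0 /\ r.[0] = p.[0] ^+ 4.
Proof.
move=> rE.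
have q0 : q.[0] = 0.
  move: (rE 0); rewrite expr0n /= !mul0r subr0 -exprM => /esym/eqP.
  by rewrite expf_eq0 => /andP[_ /eqP].
split=> //.
have /factor_theorem[q' qE] : root q 0 by apply/eqP.
rewrite polyC0 subr0 in qE.
have rE' : 'X ^+ 2 * r = 'X ^+ 2 * ('X * q' ^+ 2 - p ^+ 2) ^+ 2.
  apply/eqP; rewrite -subr_eq0; apply/eqP/horner_eq0_poly => t.
  rewrite !(hornerD, hornerN, hornerM, hornerX, horner_exp) rE qE.
  by rewrite !(hornerD, hornerN, hornerM, hornerX, horner_exp); ring.
have Xn0 : 'X ^+ 2 != 0 :> {poly F} by rewrite expf_neq0 ?polyX_eq0.
by rewrite (mulfI Xn0 rE') !(hornerD, hornerN, hornerM, hornerX, horner_exp); ring.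
Qed.

Lemma quartic_lower_bound (R : realFieldType) (a b s X e f : R) :
  0 <= a -> 0 <= b -> 0 <= s -> s < 1 / 16 ->
  `|b ^+ 2 - s * a ^+ 2| <= X -> `|a - b| <= e -> `|b - s * a| <= f ->
  s ^+ 2 / 4 * Num.max a b ^+ 4 <= Num.max (X ^+ 2) (4 * s * a * b * e * f).
Proof.
move=> a0 b0 s0 s1 /ler_normlP[hX1 hX2] /ler_normlP[_ he] /ler_normlP[_ hf].
have sq_le (y : R) : 0 <= y -> y <= X -> y ^+ 2 <= X ^+ 2 by move=> y0 yX; nra.
have pow4 (x : R) : x ^+ 4 = (x ^+ 2) ^+ 2 by rewrite -exprM.
have s2 : s ^+ 2 <= 1 by nra.
have shrink (y : R) : s ^+ 2 / 4 * y ^+ 2 <= (y / 2) ^+ 2.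
  by have := sqr_ge0 y; rewrite expr_div_n; nra.
have a2 : 0 <= a ^+ 2 by rewrite exprn_ge0.
have b2 : 0 <= b ^+ 2 by rewrite exprn_ge0.
case: (leP a b) => [ab|ba].
  rewrite pow4 le_max; apply/orP; left.
  have ab2 : a ^+ 2 <= b ^+ 2 by rewrite lerXn2r.
  have hX : b ^+ 2 / 2 <= X by nra.
  apply: le_trans (shrink _) _; apply: sq_le; lra.
rewrite pow4 le_max.
have [B_small|B_large] := leP (b ^+ 2) (s * a ^+ 2 / 2).
  apply/orP; left.
  have : (s * a ^+ 2 / 2) ^+ 2 <= X ^+ 2 by apply: sq_le; nra.
  nra.
have [B_huge|B_mid] := leP (2 * s * a ^+ 2) (b ^+ 2).
  apply/orP; left.
  have : (b ^+ 2 / 2) ^+ 2 <= X ^+ 2 by apply: sq_le; nra.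
  nra.
apply/orP; right.
have hb : b <= a / 2 by nra.
have hsa : 2 * s * a <= b by nra.
have : s * a * b * (a / 2 * (b / 2)) <= s * a * b * (e * f).
  by apply: ler_wpM2l; [rewrite !mulr_ge0 | apply: ler_pM; lra].
nra.
Qed.

Section ComplexModulus.
Context {R : realType}.
Implicit Types k t x y z w : R[i].
Local Open Scope complex_scope.
Local Open Scope ring_scope.

Lemma cabsE x : (cabs x)%:C = `|x|.
Proof. by rewrite normc_def. Qed.

Lemma cabs_ge0 x : 0 <= cabs x.
Proof. exact: sqrtr_ge0. Qed.

Lemma cabs_eq0 x : (cabs x == 0) = (x == 0).
Proof. by rewrite -(inj_eq (@complexI R)) cabsE normr_eq0. Qed.

Lemma cabs0 : cabs 0 = 0 :> R.
Proof. by apply/eqP; rewrite cabs_eq0. Qed.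

Lemma cabsM x y : cabs (x * y) = cabs x * cabs y.
Proof. by apply: complexI; rewrite rmorphM /= !cabsE normrM. Qed.

Lemma cabsX x n : cabs (x ^+ n) = cabs x ^+ n.
Proof. by apply: complexI; rewrite rmorphXn /= !cabsE normrX. Qed.

Lemma cabsN x : cabs (- x) = cabs x.
Proof. by apply: complexI; rewrite !cabsE normrN. Qed.

Lemma cabs_natr n : cabs n%:R = n%:R :> R.
Proof. by apply: complexI; rewrite cabsE rmorph_nat normr_nat. Qed.

Lemma cabs_dist x y : `|cabs x - cabs y| <= cabs (x - y).
Proof.
have cabsB (u v : R[i]) : cabs u - cabs v <= cabs (u - v).
  by rewrite -lecR rmorphB /= !cabsE lerB_dist.
apply/ler_normlP; split; last exact: cabsB.
by have := cabsB y x; rewrite -(cabsN (y - x)) opprB; lra.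
Qed.

Lemma nrm_ge0 (u : R[i] * R[i]) : 0 <= nrm u.
Proof. by rewrite /nrm le_max cabs_ge0. Qed.

Lemma nrm_eq0 x y : (nrm (x, y) == 0) = ((x, y) == (0, 0)).
Proof.
by rewrite xpair_eqE -!cabs_eq0 /nrm /= !eq_le ge_max le_max !cabs_ge0 !andbT.
Qed.

Lemma nrmZ k x y : nrm (k * x, k * y) = cabs k * nrm (x, y).
Proof. by rewrite /nrm /= !cabsM maxr_pMr // cabs_ge0. Qed.

Lemma nrm_x0 x : nrm (x, 0) = cabs x.
Proof. by rewrite /nrm /= cabs0; apply/max_idPl/cabs_ge0. Qed.

Lemma nrm_gt0 x y : (x, y) != (0, 0) -> 0 < nrm (x, y).
Proof. by rewrite lt_def nrm_ge0 nrm_eq0 andbT. Qed.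

Lemma nrm_F1t_ge t z w : cabs t < 1 / 16 ->
  cabs t ^+ 2 / 4 * nrm (z, w) ^+ 4 <= nrm (F1t t z w).
Proof.
move=> ht; rewrite /nrm /F1t /= cabsX !cabsM cabs_natr.
apply: quartic_lower_bound; rewrite ?cabs_ge0 //.
- by rewrite -!cabsX -cabsM cabs_dist.
- by rewrite distrC cabs_dist.
- by rewrite -cabsM cabs_dist.
Qed.

Definition F1t_step t (u v : R[i] * R[i]) : Prop :=
  t ^+ 2 * v.1 = (F1t t u.1 u.2).1 /\ t ^+ 2 * v.2 = (F1t t u.1 u.2).2.

Lemma F1t_step_nrm t u v :
  F1t_step t u v -> cabs t ^+ 2 * nrm v = nrm (F1t t u.1 u.2).
Proof.
by case: v => v1 v2 [e1 e2]; rewrite -cabsX -nrmZ [F1t _ _ _]surjective_pairing -e1 -e2.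
Qed.

Lemma F1t_step_ge t u v : t != 0 -> cabs t < 1 / 16 -> F1t_step t u v ->
  nrm u ^+ 4 / 4 <= nrm v.
Proof.
case: u => u1 u2 t0 ht /F1t_step_nrm vE.
have t2_gt0 : 0 < cabs t ^+ 2 by rewrite exprn_gt0 // lt_def cabs_eq0 t0 cabs_ge0.
rewrite -(ler_pM2l t2_gt0) vE; apply: le_trans (nrm_F1t_ge _ _ _ ht).
by rewrite /= mulrA mulrAC.
Qed.

Lemma F1t_step_eq0 t u v : t != 0 -> F1t_step t u v -> nrm u = 0 -> nrm v = 0.
Proof.
case: u => u1 u2 t0 /F1t_step_nrm vE /eqP; rewrite nrm_eq0 => /eqP[u10 u20].
move: vE; rewrite u10 u20 /F1t /= !(expr0n, mulr0, mul0r, subr0) nrm_x0 cabs0.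
by move/eqP; rewrite mulf_eq0 expf_eq0 cabs_eq0 (negbTE t0) => /eqP.
Qed.

Lemma F1t_step_at0 (P Q S : {poly R[i]} * {poly R[i]}) :
  (forall t, F1t_step t (pev P t) (pev Q t)) ->
  (forall t, F1t_step t (pev Q t) (pev S t)) ->
  nrm (pev Q 0) = nrm (pev P 0) ^+ 4.
Proof.
move=> PQ QS.
have [P20 Q10] := @quartic_step_at0 _ P.1 P.2 Q.1 (fun t => (PQ t).1).
have [Q20 _] := @quartic_step_at0 _ Q.1 Q.2 S.1 (fun t => (QS t).1).
by rewrite /pev /= Q10 Q20 P20 !nrm_x0 cabsX.
Qed.

End ComplexModulus.

(* The zero-propagation hypothesis is needed because ln 0 = 0. *)
Lemma ln_quartic_growth (R : realType) (N : nat -> R) (c : R) (n : nat) :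
  0 < c <= 1 -> 0 <= N n ->
  (forall k, (n <= k)%N -> c * N k ^+ 4 <= N k.+1) ->
  (forall k, (n <= k)%N -> N k = 0 -> N k.+1 = 0) ->
  forall i, ln c <= ln (N (n + i)%N) / 4 ^+ i - ln (N n).
Proof.
move=> /andP[c_gt0 c_le1] Nn_ge0 grow keep0 i.
have lnc_le0 : ln c <= 0 by rewrite ln_le0.
move: Nn_ge0; rewrite le_eqVlt => /orP[/eqP Nn0 | Nn_gt0].
  have N0 j : N (n + j)%N = 0.
    by elim: j => [|j IH]; rewrite ?addn0 -?Nn0 // addnS keep0 ?leq_addr.
  by rewrite N0 -Nn0 (ln0 (lexx 0)) mul0r subr0.
have N_gt0 j : 0 < N (n + j)%N.
  elim: j => [|j IH]; first by rewrite addn0.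
  by rewrite addnS; apply: lt_le_trans (grow _ (leq_addr _ _)); rewrite mulr_gt0 ?exprn_gt0.
have ln_step j : ln c + 4 * ln (N (n + j)%N) <= ln (N (n + j.+1)%N).
  have := grow _ (leq_addr j n); rewrite -addnS -ler_ln ?posrE ?mulr_gt0 ?exprn_gt0 //.
  by rewrite lnM ?posrE ?exprn_gt0 // lnXn // mulr_natl.
have ln_lower j : 4 ^+ j * (ln (N n) + ln c) - ln c <= ln (N (n + j)%N).
  elim: j => [|j IH]; first by rewrite addn0 expr0 mul1r addrK.
  by rewrite exprSr -mulrA; have := ln_step j; nra.
rewrite lerBrDr ler_pdivlMr ?exprn_gt0 //.
by have := ln_lower i; nra.
Qed.

Lemma degF_addn d n i : (0 < n)%N -> degF d (n + i) = (4 ^ i * degF d n)%N.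
Proof. by case: n => // n _; rewrite /degF addSn /= expnD -mulnA mulnCA. Qed.

Theorem lemma4p4 (R : realType) :
  exists c : R, 0 < c < 1 /\
  (forall t z w : R[i], cabs t < 1 / 16 -> (z, w) != (0, 0) ->
     c * cabs t ^+ 2 <= nrm (F1t t z w) / nrm (z, w) ^+ 4) /\
  (forall (P : nat -> {poly R[i]} * {poly R[i]}) (d : nat),
     (0 < d)%N ->
     coprimep (P 1%N).1 (P 1%N).2 ->
     (forall (n : nat) (t : R[i]), (0 < n)%N ->
        t ^+ 2 * (P n.+1).1.[t] = (F1t t (P n).1.[t] (P n).2.[t]).1 /\
        t ^+ 2 * (P n.+1).2.[t] = (F1t t (P n).1.[t] (P n).2.[t]).2) ->
     forall (n i : nat) (t : R[i]), (0 < n)%N -> cabs t < 1 / 16 ->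
       ln c / (degF d n)%:R <=
         ln (nrm (pev (P (n + i)%N) t)) / (degF d (n + i))%:R
         - ln (nrm (pev (P n) t)) / (degF d n)%:R).
Proof.
have c_bounds : 0 < (1 / 4 : R) <= 1 by apply/andP; split; lra.
exists (1 / 4); split; first by apply/andP; split; lra.
split.
  move=> t z w ht zw_neq0; rewrite ler_pdivlMr ?exprn_gt0 ?nrm_gt0 //.
  by rewrite mul1r [4^-1 * _]mulrC; exact: nrm_F1t_ge.
move=> P d d_gt0 _ stepP n i t n_gt0 ht.
have stepF k s : (0 < k)%N -> F1t_step s (pev (P k) s) (pev (P k.+1) s) :=
  stepP k s.
pose N k := nrm (pev (P k) t).
have grow k : (n <= k)%N -> 1 / 4 * N k ^+ 4 <= N k.+1 /\ (N k = 0 -> N k.+1 = 0).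
  move=> nk; have k_gt0 := leq_trans n_gt0 nk.
  have [t0 | t_neq0] := eqVneq t 0.
    rewrite /N t0 (F1t_step_at0 _ _ _ (stepF k ^~ k_gt0) (stepF k.+1 ^~ isT)).
    split; last by move->; rewrite expr0n.
    by have := exprn_ge0 4 (nrm_ge0 (pev (P k) 0)); lra.
  split; last exact: F1t_step_eq0 t_neq0 (stepF k t k_gt0).
  by rewrite mul1r mulrC; exact: F1t_step_ge t_neq0 ht (stepF k t k_gt0).
have := @ln_quartic_growth R N _ n c_bounds (nrm_ge0 _) (fun k nk => (grow k nk).1)
  (fun k nk => (grow k nk).2) i.
have D_gt0 : (0 : R) < (degF d n)%:R by rewrite ltr0n muln_gt0 expn_gt0 d_gt0.
by rewrite degF_addn // natrM natrX invfM mulrA -mulrBl ler_pM2r ?invr_gt0.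
Qed.
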